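(* Let $G$ be a Polish group with a comeager conjugacy class. If $N$ is a normal subgroup of $G$ of index less than $2^{\aleph_0}$, then $N=G$.
   Context: A subset of a Polish space is comeager if it contains a countable intersection of dense open sets. *)

From HB Require Import structures.
From mathcomp Require Import all_boot all_order all_algebra.
From mathcomp Require Import all_classical all_reals all_analysis.
From mathcomp Require Import Rstruct Rstruct_topology.

Set Implicit Arguments.
Unset Strict Implicit.
Unset Printing Implicit Defensive.

Import Order.TTheory GRing.Theory Num.Theory.
Local Open Scope classical_set_scope.
Local Open Scope ring_scope.

Definition is_group (G : Type) (mul : G -> G -> G) (inv : G -> G) (e : G) : Prop :=
  [/\ (forall x y z, mul x (mul y z) = mul (mul x y) z),
      (forall x, mul e x = x), (forall x, mul x e = x),
      (forall x, mul (inv x) x = e) & (forall x, mul x (inv x) = e)].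

Definition is_topological_group (G : topologicalType)
    (mul : G -> G -> G) (inv : G -> G) (e : G) : Prop :=
  [/\ is_group mul inv e,
      continuous (fun p : G * G => mul p.1 p.2) & continuous inv].

Definition separable_space (G : topologicalType) : Prop :=
  exists D : set G, countable D /\ dense D.

Definition is_metric (G : Type) (d : G -> G -> Rdefinitions.R) : Prop :=
  [/\ (forall x y, (0 <= d x y)%R),
      (forall x y, d x y = 0%R <-> x = y),
      (forall x y, d x y = d y x) &
      (forall x y z, (d x z <= d x y + d y z)%R)].

Definition metric_compatible (G : topologicalType) (d : G -> G -> Rdefinitions.R) : Prop :=
  forall A : set G, open A <->
    (forall x, A x -> exists2 eps : Rdefinitions.R, (0 < eps)%R &
       [set y | (d x y < eps)%R] `<=` A).

Definition metric_complete (G : topologicalType) (d : G -> G -> Rdefinitions.R) : Prop :=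
  forall u : nat -> G,
    (forall eps : Rdefinitions.R, (0 < eps)%R -> exists N : nat,
       forall m n : nat, (N <= m)%N -> (N <= n)%N -> (d (u m) (u n) < eps)%R) ->
    exists x : G, u @ \oo --> x.

Definition completely_metrizable (G : topologicalType) : Prop :=
  exists d : G -> G -> Rdefinitions.R, [/\ is_metric d, metric_compatible d & metric_complete d].

Definition polish_space (G : topologicalType) : Prop :=
  separable_space G /\ completely_metrizable G.

Definition polish_group (G : topologicalType)
    (mul : G -> G -> G) (inv : G -> G) (e : G) : Prop :=
  is_topological_group mul inv e /\ polish_space G.

Definition comeager (G : topologicalType) (A : set G) : Prop :=
  exists U : nat -> set G, (forall n, open (U n) /\ dense (U n)) /\
    \bigcap_n U n `<=` A.

Definition conjugacy_class (G : Type) (mul : G -> G -> G) (inv : G -> G) (g : G)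
  : set G := [set mul (mul h g) (inv h) | h in [set: G]].

Definition normal_subgroup (G : Type) (mul : G -> G -> G) (inv : G -> G) (e : G)
    (N : set G) : Prop :=
  [/\ N e, (forall x y, N x -> N y -> N (mul x y)),
      (forall x, N x -> N (inv x)) &
      (forall g x, N x -> N (mul (mul g x) (inv g)))].

Definition cosets (G : Type) (mul : G -> G -> G) (N : set G) : set (set G) :=
  [set [set mul g n | n in N] | g in [set: G]].

(* Index of N less than 2^aleph0 = |P(nat)| : strict cardinal inequality. *)
Definition index_lt_continuum (G : Type) (mul : G -> G -> G) (N : set G) : Prop :=
  ((cosets mul N #<= [set: set nat]) /\ ~ ([set: set nat] #<= cosets mul N))%card.

(* Let C be the comeager conjugacy class of g; it contains a dense G_delta set
   \bigcap_k U_k.  For any x, the relations y^-1 z \in U_k and y^-1 x z \in U_k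
   are dense and open in G * G, so Mycielski's argument (a Cantor scheme of
   shrinking balls for a complete metric) gives points F a, for a \subset nat,
   with F(a)^-1 F(b) and F(a)^-1 x F(b) in C whenever a <> b.  If g \in N then
   C \subset N, so N contains F(set0)^-1 x F(setT) * F(setT)^-1 F(set0), a
   conjugate of x.  Otherwise C misses N, so the cosets F(a) N are pairwise
   distinct and N has index at least 2^aleph_0. *)

From mathcomp Require Import all_boot all_order all_algebra.
From mathcomp Require Import all_classical all_reals all_analysis.
From mathcomp Require Import Rstruct Rstruct_topology.
From mathcomp Require Import lra zify.
Import Order.TTheory GRing.Theory Num.Theory.
Local Open Scope classical_set_scope.
Local Open Scope ring_scope.

Local Notation R := Rdefinitions.R.

Definition mball {G : Type} (d : G -> G -> R) (c : G) (r : R) : set G :=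
  [set y | d c y < r].

Section MetricBalls.
Context {G : topologicalType} {d : G -> G -> R}.
Hypotheses (d_metric : is_metric d) (d_compat : metric_compatible d).

Lemma metric_xx x : d x x = 0. Proof. by case: d_metric => _ h _ _; apply/h. Qed.
Lemma metricC x y : d x y = d y x. Proof. by case: d_metric. Qed.
Lemma metric_triangle x y z : d x z <= d x y + d y z. Proof. by case: d_metric. Qed.

Lemma mball_center c r : 0 < r -> mball d c r c.
Proof. by rewrite /mball /= metric_xx. Qed.

Lemma mball_le c r r' : r' <= r -> mball d c r' `<=` mball d c r.
Proof. by move=> r'r y /lt_le_trans; apply. Qed.

Lemma open_mball c r : open (mball d c r).
Proof.
apply/d_compat => y cy; exists (r - d c y); first by rewrite subr_gt0.
by move=> z yz; have := metric_triangle c y z; rewrite /mball /= in cy yz *; lra.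
Qed.

Lemma open_small_mball_sub A s : open A -> A !=set0 -> 0 < s ->
  exists c r, [/\ 0 < r, r <= s & mball d c r `<=` A].
Proof.
move=> oA [c Ac] s_gt0; have [r r_gt0 cr_A] := (d_compat A).1 oA c Ac.
exists c, (Num.min r s); split; first by rewrite lt_min r_gt0.
- by rewrite ge_min lexx orbT.
- by apply: subset_trans cr_A; apply: mball_le; rewrite ge_min lexx.
Qed.

Hypothesis d_complete : metric_complete d.

Lemma nested_mball_point (c : nat -> G) (r : nat -> R) :
  (forall n, 0 < r n) -> (forall n, r n <= n.+1%:R^-1) ->
  (forall n, mball d (c n.+1) (r n.+1) `<=` mball d (c n) (r n / 2)) ->
  exists x, forall n, mball d (c n) (r n) x.
Proof.
move=> r_gt0 r_small nested.
have c_near n m : (n < m)%N -> d (c n) (c m) < r n / 2.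
  move=> lt_nm; suff sub : mball d (c m) (r m) `<=` mball d (c n) (r n / 2).
    exact: (sub _ (mball_center _ _ (r_gt0 m))).
  elim: m lt_nm => // m IH; rewrite ltnS leq_eqVlt => /orP[/eqP <-|lt_nm].
    exact: nested.
  move=> y /nested; apply: subset_trans (IH lt_nm) y.
  by apply: mball_le; have := r_gt0 m; lra.
have [|x cx] := d_complete c.
  move=> eps eps_gt0; pose N := Num.truncn eps^-1; exists N.+1 => m m' Nm Nm'.
  have rN_eps : r N < eps.
    apply: le_lt_trans (r_small N) _.
    rewrite -[ltRHS]invrK ltf_pV2 ?posrE ?invr_gt0 ?ltr0n //; exact: truncnS_gt.
  have := metric_triangle (c m) (c N) (c m'); rewrite [d (c m) (c N)]metricC.
  by have := c_near _ _ Nm; have := c_near _ _ Nm'; lra.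
exists x => n.
have [M _ cM] : \forall m \near \oo, mball d x (r n / 2) (c m).
  by apply: cx; apply: open_nbhs_nbhs; split; [exact: open_mball|
    apply: mball_center; have := r_gt0 n; lra].
pose m := maxn M n.+1.
have near_n := c_near n m (leq_maxr _ _).
have near_x := cM m (leq_maxl _ _); rewrite /mball /= metricC in near_x.
by have := metric_triangle (c n) (c m) x; rewrite /mball /=; lra.
Qed.

End MetricBalls.

Section Rectangles.
Context {T U : topologicalType}.

Lemma open_setX (A : set T) (B : set U) : open A -> open B -> open (A `*` B).
Proof.
move=> oA oB; rewrite openE => -[a b] [/= Aa Bb].
by exists (A, B) => //; split; apply: open_nbhs_nbhs.
Qed.

Lemma open_subsetX (S : set (T * U)) p : open S -> S p ->
  exists A B, [/\ open A, open B, A p.1, B p.2 & A `*` B `<=` S].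
Proof.
rewrite openE => /[apply] -[[P Q] /= [+ +] PQS].
rewrite !nbhsE => -[A [oA Ap] AP] [B [oB Bq] BQ].
by exists A, B; split => // -[y z] [/= /AP Py /BQ Qz]; apply: PQS.
Qed.

Lemma open_dense_subsetX (S : set (T * U)) (A : set T) (B : set U) :
  open S -> dense S -> open A -> open B -> A !=set0 -> B !=set0 ->
  exists A' B', [/\ open A', open B', A' !=set0, B' !=set0 &
    [/\ A' `<=` A, B' `<=` B & A' `*` B' `<=` S]].
Proof.
move=> oS dS oA oB [a Aa] [b Bb].
have oAB := open_setX _ _ oA oB.
have [[y z] [ABp Sp]] := dS _ (ex_intro _ (a, b) (conj Aa Bb)) oAB.
have [A' [B' [oA' oB' A'y B'z sub]]] := open_subsetX _ _ (openI oAB oS) (conj ABp Sp).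
exists A', B'; split; [by []|by []|by exists y|by exists z|split].
- by move=> y' A'y'; have [[]] := sub (y', z) (conj A'y' B'z).
- by move=> z' B'z'; have [[]] := sub (y, z') (conj A'y B'z').
- by move=> p /sub [].
Qed.

End Rectangles.

Section RefineFamily.
Context {G : topologicalType} {S : nat -> set (G * G)}.
Hypotheses (S_open : forall k, open (S k)) (S_dense : forall k, dense (S k)).

Lemma refine_open_family (l : seq (nat * nat * nat)) (V : nat -> set G) :
  (forall i, open (V i) /\ V i !=set0) ->
  exists V' : nat -> set G,
    (forall i, [/\ open (V' i), V' i !=set0 & V' i `<=` V i]) /\
    forall i j k, (i, j, k) \in l -> i != j -> V' i `*` V' j `<=` S k.
Proof.
elim: l => [|[[i j] k] l IH] V_ok.
  by exists V; split => // i; have [] := V_ok i; split.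
have [V1 [V1_ok V1_sep]] := IH V_ok.
have [-> | ij] := eqVneq i j.
  exists V1; split => [//|i' j' k'].
  by rewrite inE => /orP[/eqP[-> -> _]|/V1_sep//]; rewrite eqxx.
have [oi ni _] := V1_ok i; have [oj nj _] := V1_ok j.
have [A [B [oA oB nA nB [AV1 BV1 AB]]]] :=
  open_dense_subsetX _ _ _ (S_open k) (S_dense k) oi oj ni nj.
pose V' m := if m == i then A else if m == j then B else V1 m.
have V'V1 m : V' m `<=` V1 m.
  by rewrite /V'; case: eqP => [->|_] //; case: eqP => [->|_].
exists V'; split.
  move=> m; have [_ _ V1V] := V1_ok m; split; last exact: subset_trans (V'V1 m) V1V.
  - by rewrite /V'; case: eqP => _ //; case: eqP => _ //; have [] := V1_ok m.
  - by rewrite /V'; case: eqP => _ //; case: eqP => _ //; have [] := V1_ok m.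
move=> i' j' k'; rewrite inE => /orP[/eqP[-> -> ->] _|il ij'].
  by rewrite /V' eqxx eq_sym (negbTE ij) eqxx.
by move=> p [/V'V1 ? /V'V1 ?]; apply: (V1_sep _ _ _ il ij').
Qed.

End RefineFamily.

Fixpoint prefix_code (a : set nat) n : nat :=
  if n is n'.+1 then (`[< a n' >] + (prefix_code a n').*2)%N else 0%N.

Lemma prefix_code_lt a n : (prefix_code a n < 2 ^ n)%N.
Proof. by elim: n => //= n IH; rewrite expnS; case: `[< a n >] => /=; lia. Qed.

Lemma prefix_codeS_half a n : (prefix_code a n.+1)./2 = prefix_code a n.
Proof. exact: half_bit_double. Qed.

Lemma prefix_code_neq a b : a <> b ->
  exists n0, forall n, (n0 <= n)%N -> prefix_code a n != prefix_code b n.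
Proof.
move=> ab; have [k ak_bk] : exists k, `[< a k >] != `[< b k >].
  apply: contrapT => /forallNP same; apply/ab/funext => k; apply/propext.
  by apply: asbool_eq_equiv; apply/eqP/negPn/negP/same.
exists k.+1 => n lt_kn; apply: contra_neq ak_bk; elim: n lt_kn => // n IH.
rewrite ltnS leq_eqVlt => /orP[/eqP <-|lt_kn] /= eq_code.
  by have := congr1 odd eq_code; rewrite !oddD !odd_double !addbF !oddb.
by apply: (IH lt_kn); have := congr1 half eq_code; rewrite !half_bit_double.
Qed.

Section Mycielski.
Context {G : topologicalType} {d : G -> G -> R} {S : nat -> set (G * G)}.
Hypotheses (d_metric : is_metric d) (d_compat : metric_compatible d).
Hypotheses (S_open : forall k, open (S k)) (S_dense : forall k, dense (S k)).

Definition cantor_scheme n (c : nat -> G) (r : nat -> R) :=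
  [/\ forall i, 0 < r i, forall i, r i <= n.+1%:R^-1 &
      forall i j k, (i < 2 ^ n)%N -> (j < 2 ^ n)%N -> i != j -> (k <= n)%N ->
        mball d (c i) (r i) `*` mball d (c j) (r j) `<=` S k].

(* Node [j] of level [n.+1] is a child of node [j./2] of level [n]. *)
Definition scheme_refines (c : nat -> G) (r : nat -> R) c' r' :=
  forall j, mball d (c' j) (r' j) `<=` mball d (c j./2) (r j./2 / 2).

Lemma cantor_scheme_step n c r : cantor_scheme n c r ->
  exists c' r', cantor_scheme n.+1 c' r' /\ scheme_refines c r c' r'.
Proof.
case=> r_gt0 _ _.
pose V j := mball d (c j./2) (r j./2 / 2).
have V_ok j : open (V j) /\ V j !=set0.
  split; first exact: open_mball.
  by exists (c j./2); apply: mball_center; rewrite ?divr_gt0.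
pose nodes := iota 0 (2 ^ n.+1).
pose l := [seq (ij, k) | ij <- [seq (i, j) | i <- nodes, j <- nodes], k <- iota 0 n.+2].
have [V' [V'_ok V'_sep]] := refine_open_family S_open S_dense l _ V_ok.
have /choice[p p_ok] j : exists p : G * R,
    [/\ 0 < p.2, p.2 <= n.+2%:R^-1 & mball d p.1 p.2 `<=` V' j].
  have [oV' nV' _] := V'_ok j.
  have [|c' [r' ?]] := open_small_mball_sub d_compat _ n.+2%:R^-1 oV' nV'.
    by rewrite invr_gt0 ltr0n.
  by exists (c', r').
exists (fun j => (p j).1), (fun j => (p j).2); split; last first.
  move=> j; have [_ _ pV'] := p_ok j; have [_ _ V'V] := V'_ok j.
  exact: subset_trans pV' V'V.
split=> [i|i|i j k ilt jlt ij kle]; [by have [] := p_ok i|by have [] := p_ok i|].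
have [_ _ pV'i] := p_ok i; have [_ _ pV'j] := p_ok j.
move=> q [/pV'i V'i /pV'j V'j]; apply: (V'_sep i j k) => //.
apply: (@allpairs_f _ _ _ (fun ij k => (ij, k))); last by rewrite mem_iota.
by apply: (@allpairs_f _ _ _ (fun i j => (i, j))); rewrite mem_iota.
Qed.

Lemma cantor_scheme_seq (x0 : G) :
  exists cr : nat -> ((nat -> G) * (nat -> R))%type, forall n,
    cantor_scheme n (cr n).1 (cr n).2 /\
    scheme_refines (cr n).1 (cr n).2 (cr n.+1).1 (cr n.+1).2.
Proof.
have /choice[next next_ok] (p : nat * ((nat -> G) * (nat -> R))%type) :
    exists s, cantor_scheme p.1 p.2.1 p.2.2 ->
      cantor_scheme p.1.+1 s.1 s.2 /\ scheme_refines p.2.1 p.2.2 s.1 s.2.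
  have [|not_scheme] := pselect (cantor_scheme p.1 p.2.1 p.2.2).
    by move=> /cantor_scheme_step[c' [r' ?]]; exists (c', r').
  by exists p.2.
pose fix cr n := if n is n'.+1 then next (n', cr n') else (fun=> x0, fun=> 1).
have cr_scheme n : cantor_scheme n (cr n).1 (cr n).2.
  elim: n => [|n IH]; last exact: (next_ok (n, cr n) IH).1.
  split => //= [_|i j k]; first by rewrite invr1.
  by rewrite expn0 !ltnS !leqn0 => /eqP -> /eqP ->; rewrite eqxx.
by exists cr => n; split => //; exact: (next_ok (n, cr n) (cr_scheme n)).2.
Qed.

Hypothesis d_complete : metric_complete d.

Theorem mycielski (x0 : G) :
  exists F : set nat -> G, forall a b, a <> b -> forall k, S k (F a, F b).
Proof.
have [cr cr_ok] := cantor_scheme_seq x0.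
pose c a n := (cr n).1 (prefix_code a n); pose r a n := (cr n).2 (prefix_code a n).
have /choice[F F_branch] a : exists x, forall n, mball d (c a n) (r a n) x.
  apply: (nested_mball_point d_metric d_compat d_complete).
  - by move=> n; have [[r_gt0 _ _] _] := cr_ok n; apply: r_gt0.
  - by move=> n; have [[_ r_small _] _] := cr_ok n; apply: r_small.
  - move=> n; have [_ refines] := cr_ok n.
    by rewrite /c /r -(prefix_codeS_half a n); apply: refines.
exists F => a b ab k; have [n0 code_neq] := prefix_code_neq _ _ ab.
pose n := maxn n0 k; have [[_ _ sep] _] := cr_ok n.
apply: (sep _ _ k (prefix_code_lt a n) (prefix_code_lt b n) _ (leq_maxr _ _) (F a, F b)).
  exact/code_neq/leq_maxl.
exact: (conj (F_branch a n) (F_branch b n)).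
Qed.

End Mycielski.

Section GroupLaws.
Context {G : Type} {mul : G -> G -> G} {inv : G -> G} {e : G}.
Hypothesis G_group : is_group mul inv e.

Lemma mulGA x y z : mul x (mul y z) = mul (mul x y) z. Proof. by case: G_group. Qed.
Lemma mul1G x : mul e x = x. Proof. by case: G_group. Qed.
Lemma mulG1 x : mul x e = x. Proof. by case: G_group. Qed.
Lemma mulVG x : mul (inv x) x = e. Proof. by case: G_group. Qed.
Lemma mulGV x : mul x (inv x) = e. Proof. by case: G_group. Qed.
Lemma mulKG x y : mul (inv x) (mul x y) = y. Proof. by rewrite mulGA mulVG mul1G. Qed.
Lemma mulKVG x y : mul x (mul (inv x) y) = y. Proof. by rewrite mulGA mulGV mul1G. Qed.
Lemma invGK x : inv (inv x) = x.
Proof. by rewrite -[inv (inv x)]mulG1 -(mulVG x) mulGA mulVG mul1G. Qed.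

Context {N : set G}.
Hypothesis N_normal : normal_subgroup mul inv e N.

Lemma normal_conjugacy_class_sub g : N g -> conjugacy_class mul inv g `<=` N.
Proof. by case: N_normal => _ _ _ NJ Ng _ [h _ <-]; apply: NJ. Qed.

Lemma normal_conjugacy_class_mem g w : conjugacy_class mul inv g w -> N w -> N g.
Proof.
case: N_normal => _ _ _ NJ [h _ <-] /(NJ (inv h)).
by rewrite invGK !mulGA mulVG mul1G -mulGA mulVG mulG1.
Qed.

Lemma normal_mem_sandwich x y z :
  N (mul (inv y) (mul x z)) -> N (mul (inv z) y) -> N x.
Proof.
case: N_normal => _ NM _ NJ yxz zy; have /(NJ y) := NM _ _ yxz zy.
by rewrite -!mulGA mulKVG mulKVG mulGV mulG1.
Qed.

Lemma lcoset_eq_mem a b :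
  [set mul a n | n in N] = [set mul b n | n in N] -> N (mul (inv b) a).
Proof.
case: N_normal => Ne _ _ _ ab.
have : [set mul a n | n in N] a by exists e; rewrite ?mulG1.
by rewrite ab => -[n Nn <-]; rewrite mulKG.
Qed.

Lemma continuum_le_cosets (F : set nat -> G) :
  (forall a b, a <> b -> ~ N (mul (inv (F b)) (F a))) ->
  ([set: set nat] #<= cosets mul N)%card.
Proof.
move=> F_sep; apply/pcard_leP/injfunPex.
exists (fun a => [set mul (F a) n | n in N]); first by move=> a _; exists (F a).
move=> a b _ _ /lcoset_eq_mem Nba; apply: contrapT => ab; exact: F_sep Nba.
Qed.

End GroupLaws.

Definition sandwich {G : Type} (mul : G -> G -> G) (inv : G -> G) (x : G) (p : G * G) :=
  mul (inv p.1) (mul x p.2).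

Section TopologicalGroup.
Context {G : topologicalType} {mul : G -> G -> G} {inv : G -> G} {e : G}.
Hypothesis G_topgroup : is_topological_group mul inv e.

Let G_group : is_group mul inv e. Proof. by case: G_topgroup. Qed.

Lemma continuous_mull a : continuous (mul a).
Proof.
case: G_topgroup => _ mul_cont _ z.
apply: (continuous_comp (f := fun z => (a, z)) (g := fun p : G * G => mul p.1 p.2)).
  by apply: cvg_pair; [exact: cvg_cst | exact: cvg_id].
exact: mul_cont.
Qed.

Lemma continuous_sandwich x : continuous (sandwich mul inv x).
Proof.
case: G_topgroup => _ mul_cont inv_cont p.
apply: (continuous_comp (f := fun p : G * G => (inv p.1, mul x p.2))
                        (g := fun p : G * G => mul p.1 p.2)); last exact: mul_cont.
apply: cvg_pair.
  exact: (continuous_comp (f := fst) (g := inv) cvg_fst (inv_cont _)).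
exact: (continuous_comp (f := snd) (g := mul x) cvg_snd (continuous_mull _ _)).
Qed.

Lemma open_sandwich_preimage x (U : set G) :
  open U -> open (sandwich mul inv x @^-1` U).
Proof. by move/(continuousP _).1; apply; exact: continuous_sandwich. Qed.

Lemma dense_sandwich_preimage x (U : set G) :
  open U -> dense U -> dense (sandwich mul inv x @^-1` U).
Proof.
move=> oU dU W [p Wp] oW.
have [A [B [_ oB Ap Bp AB_W]]] := open_subsetX _ _ oW Wp.
pose B' := mul p.1 @^-1` (mul (inv x) @^-1` B).
have oB' : open B' by do 2![apply: (continuousP _).1 (continuous_mull _) _ _].
have [|w [B'w Uw]] := dU B' _ oB'.
  exists (sandwich mul inv x p).
  by rewrite /B' /sandwich /= (mulKVG G_group) (mulKG G_group).
exists (p.1, mul (inv x) (mul p.1 w)); split; first exact: AB_W.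
by rewrite /sandwich /= (mulKVG G_group) (mulKG G_group).
Qed.

Lemma mycielski_sandwich (d : G -> G -> R) (U : nat -> set G) x :
  is_metric d -> metric_compatible d -> metric_complete d ->
  (forall k, open (U k) /\ dense (U k)) ->
  exists F : set nat -> G, forall a b, a <> b -> forall k,
    U k (mul (inv (F a)) (F b)) /\ U k (sandwich mul inv x (F a, F b)).
Proof.
move=> d_metric d_compat d_complete U_ok.
pose S k := sandwich mul inv e @^-1` U k `&` sandwich mul inv x @^-1` U k.
have S_open k : open (S k).
  by have [oU _] := U_ok k; apply: openI; apply: open_sandwich_preimage.
have S_dense k : dense (S k).
  have [oU dU] := U_ok k.
  by apply: denseI; [apply: open_sandwich_preimage|apply: dense_sandwich_preimage..].
have [F F_sep] := mycielski d_metric d_compat S_open S_dense d_complete e.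
exists F => a b ab k; have [] := F_sep a b ab k.
by rewrite /sandwich /= (mul1G G_group).
Qed.

End TopologicalGroup.

Theorem lemma6p4 (G : topologicalType) (mul : G -> G -> G) (inv : G -> G) (e : G) :
  polish_group mul inv e ->
  (exists g : G, comeager (conjugacy_class mul inv g)) ->
  forall N : set G, normal_subgroup mul inv e N ->
  index_lt_continuum mul N ->
  N = [set: G].
Proof.
move=> [G_topgroup [_ [d [d_metric d_compat d_complete]]]] [g [U [U_ok U_sub]]].
move=> N N_normal [_ not_continuum_le].
have G_group : is_group mul inv e by case: G_topgroup.
apply/seteqP; split => // x _.
have [F F_sep] := mycielski_sandwich G_topgroup _ _ x d_metric d_compat d_complete U_ok.
have class_e a b : a <> b -> conjugacy_class mul inv g (mul (inv (F a)) (F b)).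
  by move=> ab; apply: U_sub => k _; have [] := F_sep a b ab k.
have class_x a b : a <> b -> conjugacy_class mul inv g (mul (inv (F a)) (mul x (F b))).
  by move=> ab; apply: U_sub => k _; have [] := F_sep a b ab k.
have [Ng|notNg] := pselect (N g).
  have set0_setT : set0 <> [set: nat] by move=> /seteqP[_ /(_ 0%N I)].
  apply: (normal_mem_sandwich G_group N_normal x (F set0) (F setT)).
    exact: normal_conjugacy_class_sub N_normal _ Ng _ (class_x _ _ set0_setT).
  exact: normal_conjugacy_class_sub N_normal _ Ng _ (class_e _ _ (nesym set0_setT)).
exfalso; apply/not_continuum_le/(continuum_le_cosets G_group N_normal F) => a b ab Nba.
exact/notNg/(normal_conjugacy_class_mem G_group N_normal _ _ (class_e _ _ (nesym ab))).
Qed.
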